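(* For an integer $k\ge 1$, let $T_k$ be the tree on $9k+4$ vertices with vertex set $\{v_0,v_1,v_2,v_3\}\cup\{x_{ij},y_{ij},z_{ij}: 1\le i\le 3,\ 1\le j\le k\}$ and edges $v_0v_i$ for $1\le i\le 3$, and $v_ix_{ij}$, $x_{ij}y_{ij}$, $y_{ij}z_{ij}$ for all $1\le i\le 3$, $1\le j\le k$ (so each $v_i$ has $k$ pendant paths $x_{ij}y_{ij}z_{ij}$ attached at $x_{ij}$). Then for every $k\ge 4$, the domination polynomial $D(T_k,x)$ is not log-concave.
   Context: A dominating set of a graph $G=(V,E)$ is a set $S\subseteq V$ such that every vertex is in $S$ or adjacent to a vertex of $S$. For a graph $G$ of order $n$, let $d_i$ be the number of dominating sets of $G$ of cardinality $i$; the domination polynomial is $D(G,x)=\sum_{i=0}^n d_i x^i$. A polynomial $a_0+a_1x+\cdots+a_nx^n$ is log-concave if $a_i^2\ge a_{i-1}a_{i+1}$ for every $1\le i\le n-1$. *)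

From mathcomp Require Import all_boot all_order all_algebra.
Set Implicit Arguments. Unset Strict Implicit. Unset Printing Implicit Defensive.
Import GRing.Theory.
Local Open Scope ring_scope.

Definition dominating (V : finType) (adj : rel V) (S : {set V}) : bool :=
  [forall v, (v \in S) || [exists u in S, adj v u]].

Definition dom_count (V : finType) (adj : rel V) (i : nat) : nat :=
  #|[set S : {set V} | dominating adj S & #|S| == i]|.

Definition dom_poly (V : finType) (adj : rel V) : {poly int} :=
  \poly_(i < #|V|.+1) (dom_count adj i)%:Z.

Definition log_concave (p : {poly int}) (n : nat) : Prop :=
  forall i : nat, (1 <= i)%N -> (i <= n.-1)%N ->
    p`_(i.-1) * p`_(i.+1) <= p`_i ^+ 2.

(* Vertices of T_k:
   inl (inl tt)            = v_0
   inl (inr i)             = v_{i+1}, i : 'I_3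
   inr (i, j, 0/1/2)       = x_{i+1,j+1}, y_{i+1,j+1}, z_{i+1,j+1} *)
Definition Tk_vertex (k : nat) : finType :=
  ((unit + 'I_3) + ('I_3 * 'I_k * 'I_3))%type.

Definition Tk_edge (k : nat) (a b : Tk_vertex k) : bool :=
  match a, b with
  | inl (inl _), inl (inr _) => true
  | inl (inr i), inr (i', _, l) => (i == i') && (val l == 0)%N
  | inr (i, j, l), inr (i', j', l') =>
      (i == i') && (j == j') && (val l'  == (val l).+1)%N
  | _, _ => false
  end.

Definition Tk_adj (k : nat) : rel (Tk_vertex k) :=
  fun a b => Tk_edge a b || Tk_edge b a.

From mathcomp Require Import all_boot all_order all_algebra zify.
Set Implicit Arguments. Unset Strict Implicit. Unset Printing Implicit Defensive.
Import GRing.Theory.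

(* On every pendant path p = x_p y_p z_p a dominating set S of T_k contains y_p
   or z_p; taking y_p when it lies in S gives 3k vertices [tails Y] of S, where
   Y is the set of paths with y_p in S.  If |S| = 3k+2, then v_0 is in S (else
   the three hubs v_i need three more vertices), so S = {v_0, w} u tails Y, and
   Y must contain every path p with v_{p.1}, x_p not in {v_0, w}.  Counting the
   pairs (w, Y) gives d_{3k+2} <= 3 2^k + 12k + 1.  Conversely C u tails Y is
   dominating of size 3k+3 when C = {v_1, v_2, v_3}, or when C consists of x_p
   and the two hubs off the branch of p and Y contains the other paths of that
   branch; this gives d_{3k+3} >= 2^{3k} + 3k 2^{2k+1}.  As d_{3k+1} > 0 ({v_0}
   with all the y_p), d_{3k+1} d_{3k+3} > d_{3k+2}^2 once 2^k >= 4k. *)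

Section Domination.
Variables (V : finType) (adj : rel V).

Definition dominates (S : {set V}) (v : V) : bool :=
  (v \in S) || [exists u in S, adj v u].

Lemma dominatingP (S : {set V}) :
  reflect (forall v, dominates S v) (dominating adj S).
Proof. exact: forallP. Qed.

Lemma dominatesS (S S' : {set V}) v :
  S \subset S' -> dominates S v -> dominates S' v.
Proof.
move=> /subsetP sSS' /orP[vS | /existsP[u /andP[uS adj_vu]]].
  by rewrite /dominates sSS'.
by apply/orP; right; apply/existsP; exists u; rewrite sSS'.
Qed.

Lemma coef_dom_poly i :
  i <= #|V| -> ((dom_poly adj)`_i = (dom_count adj i)%:Z)%R.
Proof. by rewrite /dom_poly coef_poly ltnS => ->. Qed.

Lemma dom_count_ge (I : finType) (A : {set I}) (f : I -> {set V}) n :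
    {in A &, injective f} ->
    {in A, forall x, dominating adj (f x) && (#|f x| == n)} ->
  #|A| <= dom_count adj n.
Proof.
move=> f_inj domf; rewrite /dom_count -(card_in_imset f_inj).
by apply/subset_leq_card/subsetP => _ /imsetP[x xA ->]; rewrite inE domf.
Qed.

Lemma dom_count_le (I : finType) (A : {set I}) (f : I -> {set V}) n :
    (forall S, dominating adj S -> #|S| = n -> exists2 x, x \in A & S = f x) ->
  dom_count adj n <= #|A|.
Proof.
move=> covf; apply: leq_trans (leq_imset_card f A).
apply/subset_leq_card/subsetP => S; rewrite inE => /andP[domS /eqP cardS].
by have [x xA ->] := covf S domS cardS; exact: imset_f.
Qed.

End Domination.

Lemma card_supsets (T : finType) (A : {set T}) :
  #|[set B : {set T} | A \subset B]| = 2 ^ #|~: A|.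
Proof.
rewrite -card_powerset -(card_imset (powerset (~: A)) (@setC_inj T)).
apply: eq_card => B; rewrite inE; apply/idP/imsetP => [sAB | [X]].
  by exists (~: B); rewrite ?setCK // powersetE setCS.
by rewrite powersetE => sXA ->; rewrite -setCS setCK.
Qed.

Lemma card_supset_pairs (I T : finType) (F : I -> {set T}) :
  #|[set iB : I * {set T} | F iB.1 \subset iB.2]| = \sum_i 2 ^ #|~: F i|.
Proof.
rewrite -sum1dep_card.
rewrite -(pair_big_dep xpredT (fun i (B : {set T}) => F i \subset B) (fun _ _ => 1)).
by apply: eq_bigr => i _; rewrite sum1dep_card card_supsets.
Qed.

Lemma big_option (R : Type) (idx : R) (op : Monoid.com_law idx) (T : finType)
    (F : option T -> R) :
  \big[op/idx]_t F t = op (F None) (\big[op/idx]_t F (Some t)).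
Proof.
rewrite (bigD1 None) //= (reindex_omap Some id) //=; last by case.
by congr (op _ _); apply: eq_bigl => t; rewrite eqxx.
Qed.

Lemma eq_inr (A B : eqType) (a b : B) : (@inr A B a == inr b) = (a == b).
Proof. by []. Qed.

Section Tree.
Variable k : nat.
Local Notation V := (Tk_vertex k).
Local Notation P := ('I_3 * 'I_k)%type.
Local Notation adj := (@Tk_adj k).

Definition v0 : V := inl (inl tt).
Definition vi (i : 'I_3) : V := inl (inr i).
Definition xv (p : P) : V := inr (p, @Ordinal 3 0 isT).
Definition yv (p : P) : V := inr (p, @Ordinal 3 1 isT).
Definition zv (p : P) : V := inr (p, @Ordinal 3 2 isT).

Variant vertex_spec : V -> Type :=
  | VertexRoot : vertex_spec v0
  | VertexHub i : vertex_spec (vi i)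
  | VertexX p : vertex_spec (xv p)
  | VertexY p : vertex_spec (yv p)
  | VertexZ p : vertex_spec (zv p).

Lemma vertexP u : vertex_spec u.
Proof.
case: u => [[[]|i]|[p [[|[|[|//]]] lt_l3]]];
  [exact: VertexRoot | exact: VertexHub | ..];
  rewrite (bool_irrelevance lt_l3 isT);
  [exact: VertexX | exact: VertexY | exact: VertexZ].
Qed.

Lemma vi_inj : injective vi. Proof. by move=> i j []. Qed.
Lemma xv_inj : injective xv. Proof. by move=> p q []. Qed.
Lemma yv_inj : injective yv. Proof. by move=> p q []. Qed.
Lemma zv_inj : injective zv. Proof. by move=> p q []. Qed.

Ltac vertex_cases u :=
  case: (vertexP u) => [|?|[? ?]|[? ?]|[? ?]];
  rewrite /Tk_adj /v0 /vi /xv /yv /zv /= ?eq_inr ?xpair_eqE;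
  rewrite ?andbF ?andbT ?orbF ?orFb //;
  try by apply/andP/andP => -[/eqP-> /eqP->].

Lemma adj_zv p u : adj (zv p) u = (u == yv p).
Proof. by case: p => i j; vertex_cases u. Qed.

Lemma adj_yv p u : adj (yv p) u = (u == xv p) || (u == zv p).
Proof. by case: p => i j; vertex_cases u. Qed.

Lemma adj_xv p u : adj (xv p) u = (u == vi p.1) || (u == yv p).
Proof. by case: p => i j; vertex_cases u. Qed.

Lemma adj_vi i u : adj (vi i) u = (u == v0) || [exists j, u == xv (i, j)].
Proof.
vertex_cases u;
  try by apply/esym/existsP => -[j]; rewrite ?eq_inr ?xpair_eqE ?andbF.
by apply/eqP/existsP => [<-|[j /eqP[-> _]]]; first eexists.
Qed.

Lemma adj_v0 u : adj v0 u = [exists i, u == vi i].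
Proof.
vertex_cases u; try by apply/esym/existsP => -[].
by apply/esym/existsP; eexists.
Qed.

Lemma dominates_zv (S : {set V}) p :
  dominates adj S (zv p) = (zv p \in S) || (yv p \in S).
Proof.
rewrite /dominates; congr (_ || _); apply/existsP/idP => [[u]|yS].
  by rewrite adj_zv => /andP[uS /eqP <-].
by exists (yv p); rewrite yS adj_zv eqxx.
Qed.

Lemma dominates_yv (S : {set V}) p :
  dominates adj S (yv p) = [|| yv p \in S, xv p \in S | zv p \in S].
Proof.
rewrite /dominates; congr (_ || _); apply/existsP/orP => [[u]|[xS|zS]].
- by rewrite adj_yv => /andP[uS /orP[]/eqP Eu]; [left|right]; rewrite -Eu.
- by exists (xv p); rewrite xS adj_yv eqxx.
- by exists (zv p); rewrite zS adj_yv eqxx orbT.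
Qed.

Lemma dominates_xv (S : {set V}) p :
  dominates adj S (xv p) = [|| xv p \in S, vi p.1 \in S | yv p \in S].
Proof.
rewrite /dominates; congr (_ || _); apply/existsP/orP => [[u]|[vS|yS]].
- by rewrite adj_xv => /andP[uS /orP[]/eqP Eu]; [left|right]; rewrite -Eu.
- by exists (vi p.1); rewrite vS adj_xv eqxx.
- by exists (yv p); rewrite yS adj_xv eqxx orbT.
Qed.

Lemma dominates_vi (S : {set V}) i :
  dominates adj S (vi i) =
    [|| vi i \in S, v0 \in S | [exists j, xv (i, j) \in S]].
Proof.
rewrite /dominates; congr (_ || _).
apply/existsP/orP => [[u]|[v0S|/existsP[j xS]]].
- rewrite adj_vi => /andP[uS /orP[/eqP Eu|/existsP[j /eqP Eu]]].
    by left; rewrite -Eu.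
  by right; apply/existsP; exists j; rewrite -Eu.
- by exists v0; rewrite v0S adj_vi eqxx.
- exists (xv (i, j)); rewrite xS adj_vi.
  by apply/orP; right; apply/existsP; exists j.
Qed.

Lemma dominates_v0 (S : {set V}) :
  dominates adj S v0 = (v0 \in S) || [exists i, vi i \in S].
Proof.
rewrite /dominates; congr (_ || _); apply/existsP/existsP => [[u]|[i viS]].
- by rewrite adj_v0 => /andP[uS /existsP[i /eqP Eu]]; exists i; rewrite -Eu.
- by exists (vi i); rewrite viS adj_v0; apply/existsP; exists i.
Qed.

Definition tails (Y : {set P}) : {set V} := yv @: Y :|: zv @: ~: Y.
Definition y_paths (S : {set V}) : {set P} := [set p | yv p \in S].
Definition y_forced (S : {set V}) : {set P} :=
  [set p | (vi p.1 \notin S) && (xv p \notin S)].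
Definition trunk : {set V} :=
  [set u | if u is inr (_, l) then l == ord0 else true].

Lemma tails_trunkF (Y : {set P}) u : u \in trunk -> (u \in tails Y) = false.
Proof.
by move=> ut; apply/setUP => -[]/imsetP[p _ Eu]; move: ut; rewrite Eu inE.
Qed.

Lemma disjoint_trunk_tails (C : {set V}) (Y : {set P}) :
  C \subset trunk -> [disjoint C & tails Y].
Proof.
move=> sCt; rewrite disjoint_subset; apply/subsetP => u /(subsetP sCt) ut.
by rewrite inE tails_trunkF.
Qed.

Lemma mem_tails_yv (Y : {set P}) p : (yv p \in tails Y) = (p \in Y).
Proof.
rewrite in_setU (mem_imset _ _ yv_inj).
by case: imsetP => [[q _ [_]]|]; rewrite ?orbF.
Qed.

Lemma mem_tails_zv (Y : {set P}) p : (zv p \in tails Y) = (p \notin Y).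
Proof.
rewrite in_setU (mem_imset _ _ zv_inj) inE.
by case: imsetP => [[q _ [_]]|].
Qed.

Lemma card_tails (Y : {set P}) : #|tails Y| = 3 * k.
Proof.
have disj : [disjoint yv @: Y & zv @: ~: Y].
  rewrite disjoint_subset; apply/subsetP => _ /imsetP[p _ ->].
  by rewrite inE; apply/imsetP => -[q _ [_]].
move: disj; rewrite -(leq_card_setU _ _).2 => /eqP->.
rewrite !card_imset ?cardsC ?card_prod ?card_ord //.
  exact: zv_inj.
exact: yv_inj.
Qed.

Lemma card_setU_tails (C : {set V}) (Y : {set P}) :
  C \subset trunk -> #|C :|: tails Y| = #|C| + 3 * k.
Proof.
move=> sCt; apply/eqP.
by rewrite -(card_tails Y) (leq_card_setU _ _).2 disjoint_trunk_tails.
Qed.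

Lemma y_paths_setU_tails (C : {set V}) (Y : {set P}) :
  C \subset trunk -> y_paths (C :|: tails Y) = Y.
Proof.
move=> sCt; apply/setP => p; rewrite inE in_setU mem_tails_yv.
by rewrite (contraNF (subsetP sCt (yv p))) // inE.
Qed.

Lemma setU_tails_inj (C1 C2 : {set V}) (Y1 Y2 : {set P}) :
    C1 \subset trunk -> C2 \subset trunk ->
  C1 :|: tails Y1 = C2 :|: tails Y2 -> C1 = C2 /\ Y1 = Y2.
Proof.
move=> sC1t sC2t E.
have EY : Y1 = Y2.
  by rewrite -(y_paths_setU_tails Y1 sC1t) E y_paths_setU_tails.
have setU_tailsK (C : {set V}) (Y : {set P}) :
    C \subset trunk -> (C :|: tails Y) :\: tails Y = C.
  by move=> sCt; rewrite setDUl setDv setU0; apply/setDidPl/disjoint_trunk_tails.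
by rewrite -(setU_tailsK C1 Y1) // E EY setU_tailsK.
Qed.

Lemma y_forced_setU_tails (C : {set V}) (Y : {set P}) :
  y_forced (C :|: tails Y) = y_forced C.
Proof.
apply/setP => p; rewrite [LHS]inE [RHS]inE !(in_setU _ C).
by rewrite !tails_trunkF ?inE // !orbF.
Qed.

Lemma tails_y_paths_sub (S : {set V}) :
  dominating adj S -> tails (y_paths S) \subset S.
Proof.
move/dominatingP => domS; apply/subsetP => _ /setUP[]/imsetP[p + ->].
  by rewrite inE.
rewrite !inE => yS.
by have := domS (zv p); rewrite dominates_zv (negbTE yS) orbF.
Qed.

Lemma y_forced_sub_y_paths (S : {set V}) :
  dominating adj S -> y_forced S \subset y_paths S.
Proof.
move/dominatingP => domS; apply/subsetP => p; rewrite !inE => /andP[vS xS].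
by have := domS (xv p); rewrite dominates_xv (negbTE vS) (negbTE xS).
Qed.

Lemma dominating_setU_tails (C : {set V}) (Y : {set P}) :
    dominates adj C v0 -> (forall i, dominates adj C (vi i)) ->
    y_forced C \subset Y ->
  dominating adj (C :|: tails Y).
Proof.
move=> domv0 domvi /subsetP forcedY; have sCS := subsetUl C (tails Y).
apply/dominatingP => u; case: (vertexP u) => [|i|p|p|p].
- exact: dominatesS sCS domv0.
- exact: dominatesS sCS (domvi i).
- rewrite dominates_xv !(in_setU _ C) mem_tails_yv.
  have [/forcedY -> | ] := boolP (p \in y_forced C); first by rewrite !orbT.
  by rewrite inE negb_and !negbK => /orP[] ->; rewrite ?orbT.
- rewrite dominates_yv !(in_setU _ C) mem_tails_yv mem_tails_zv.
  by case: (p \in Y); rewrite ?orbT.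
- rewrite dominates_zv !(in_setU _ C) mem_tails_yv mem_tails_zv.
  by case: (p \in Y); rewrite ?orbT.
Qed.

Definition branch (u : V) : option 'I_3 :=
  match u with inl (inr i) | inr (i, _, _) => Some i | _ => None end.

Lemma root_in_small_dominating (S : {set V}) :
  dominating adj S -> #|S| <= (3 * k).+2 -> v0 \in S.
Proof.
move=> domS cardS; apply: contraT => v0S.
have sTS := tails_y_paths_sub domS.
have branches :
    [set Some i | i : 'I_3] \subset branch @: (S :\: tails (y_paths S)).
  apply/subsetP => _ /imsetP[i _ ->].
  have := (dominatingP _ _ domS) (vi i).
  rewrite dominates_vi (negbTE v0S) /= => /orP[viS | /existsP[j xS]].
  - by apply/imsetP; exists (vi i); rewrite // in_setD viS tails_trunkF ?inE.
  - apply/imsetP; exists (xv (i, j)) => //.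
    by rewrite in_setD xS tails_trunkF ?inE.
have := leq_trans (subset_leq_card branches) (leq_imset_card _ _).
rewrite card_imset ?cardsT ?card_ord; last exact: Some_inj.
rewrite cardsDS // card_tails; lia.
Qed.

Lemma small_dominating_shape (S : {set V}) :
    dominating adj S -> #|S| = (3 * k).+2 ->
  exists w, S = [set v0; w] :|: tails (y_paths S).
Proof.
move=> domS cardS; set T := tails (y_paths S).
have sTS : T \subset S := tails_y_paths_sub domS.
have v0R : v0 \in S :\: T.
  by rewrite in_setD /T tails_trunkF ?inE // root_in_small_dominating ?cardS.
have : #|S :\: T| = 2 by rewrite cardsDS // cardS card_tails -addn2 addKn.
rewrite (cardsD1 v0) v0R => -[/eqP/cards1P[w Rw]].
by exists w; rewrite -{1}(setID S T) (setIidPr sTS) -(setD1K v0R) Rw setUC.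
Qed.

Lemma sum_vertices (F : V -> nat) :
  \sum_w F w =
    F v0 + \sum_i F (vi i) + \sum_p (F (xv p) + F (yv p) + F (zv p)).
Proof.
rewrite !big_sumType /= (big_pred1 tt) //.
rewrite (eq_bigr (fun pl => F (inr (pl.1, pl.2)))); last by case.
rewrite -(pair_bigA _ (fun p l => F (inr (p, l)))); congr (_ + _).
apply: eq_bigr => p _; rewrite !big_ord_recl big_ord0 /= addn0 addnA.
rewrite /xv /yv /zv.
by congr (F (inr (p, _)) + F (inr (p, _)) + F (inr (p, _))); apply: val_inj.
Qed.

Lemma setC_y_forced (C : {set V}) :
  ~: y_forced C = [set p | (vi p.1 \in C) || (xv p \in C)].
Proof. by apply/setP => p; rewrite !inE negb_and !negbK. Qed.

Lemma sum_root_pair_choices :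
  \sum_w 2 ^ #|~: y_forced [set v0; w]| = 3 * 2 ^ k + 12 * k + 1.
Proof.
have freeE w :
    ~: y_forced [set v0; w] = [set p | (vi p.1 == w) || (xv p == w)].
  by apply/setP => p; rewrite setC_y_forced !inE.
have no_free w : (forall p, (vi p.1 == w) || (xv p == w) = false) ->
    #|~: y_forced [set v0; w]| = 0.
  move=> wF; rewrite freeE; apply/eqP; rewrite cards_eq0.
  by apply/eqP/setP => p; rewrite !inE wF.
have hub_free i : #|~: y_forced [set v0; vi i]| = k.
  rewrite freeE (_ : [set p | _] = setX [set i] setT).
    by rewrite cardsX cards1 cardsT card_ord mul1n.
  by apply/setP => -[a b]; rewrite !inE (inj_eq vi_inj).
have x_free p : #|~: y_forced [set v0; xv p]| = 1.
  rewrite freeE (_ : [set q | _] = [set p]) ?cards1 //.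
  by apply/setP => q; rewrite !inE (inj_eq xv_inj).
have y_free p : #|~: y_forced [set v0; yv p]| = 0.
  by apply: no_free => q; rewrite /xv /yv eq_inr xpair_eqE andbF.
have z_free p : #|~: y_forced [set v0; zv p]| = 0.
  by apply: no_free => q; rewrite /xv /zv eq_inr xpair_eqE andbF.
rewrite sum_vertices no_free //.
under eq_bigr => i _ do rewrite hub_free.
under [X in _ + X = _]eq_bigr => p _ do rewrite x_free y_free z_free.
by rewrite !sum_nat_const !card_ord card_prod !card_ord; lia.
Qed.

Definition core (t : option P) : {set V} :=
  if t is Some p then xv p |: vi @: [set~ p.1] else vi @: setT.

Lemma mem_core_vi t i : (vi i \in core t) = (Some i != omap fst t).
Proof. by case: t => [p|] /=; rewrite ?in_setU1 (mem_imset _ _ vi_inj) !inE. Qed.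

Lemma mem_core_xv t p : (xv p \in core t) = (Some p == t).
Proof.
case: t => [q|] /=; rewrite ?in_setU1 ?(inj_eq xv_inj).
  by case: imsetP => [[x _ /eqP]|]; rewrite ?orbF.
by case: imsetP => [[x _ /eqP]|].
Qed.

Lemma core_sub_trunk t : core t \subset trunk.
Proof.
apply/subsetP => u; case: t => [p /setU1P[-> | ] |] /=; first by rewrite inE.
  by case/imsetP => i _ ->; rewrite inE.
by case/imsetP => i _ ->; rewrite inE.
Qed.

Lemma core_inj : injective core.
Proof.
move=> [p|] [q|] E //.
- by move: (mem_core_xv (Some p) p); rewrite E mem_core_xv eqxx => /eqP.
- by move: (mem_core_xv (Some p) p); rewrite E mem_core_xv eqxx.
- by move: (mem_core_xv (Some q) q); rewrite -E mem_core_xv eqxx.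
Qed.

Lemma card_core t : #|core t| = 3.
Proof.
case: t => [p|] /=; last by rewrite card_imset ?cardsT ?card_ord //; exact: vi_inj.
rewrite cardsU1 card_imset ?cardsC1 ?card_ord; last exact: vi_inj.
by case: imsetP => // -[].
Qed.

Lemma core_dominates_v0 t : dominates adj (core t) v0.
Proof.
rewrite dominates_v0; apply/orP; right; apply/existsP.
case: t => [p|]; [exists (lift p.1 ord0) | exists ord0]; rewrite mem_core_vi //=.
by rewrite eq_sym neq_lift.
Qed.

Lemma core_dominates_vi t i : dominates adj (core t) (vi i).
Proof.
rewrite dominates_vi mem_core_vi; case: t => [[a j]|] //.
case: (eqVneq i a) => [->|ne]; last by rewrite /= ne.
by apply/or3P/Or33/existsP; exists j; rewrite mem_core_xv.
Qed.

Lemma card_setC_y_forced_core t :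
  #|~: y_forced (core t)| = if t is Some _ then (2 * k).+1 else 3 * k.
Proof.
rewrite setC_y_forced; case: t => [[a j]|].
  have -> : [set p | (vi p.1 \in core (Some (a, j)))
                     || (xv p \in core (Some (a, j)))]
      = (a, j) |: setX [set~ a] [set: 'I_k].
    apply/setP => -[b l]; rewrite [LHS]inE mem_core_vi mem_core_xv !inE /=.
    rewrite !(inj_eq (@Some_inj _)) !xpair_eqE.
    by case: eqVneq => _ //=; rewrite orbF.
  by rewrite cardsU1 cardsX cardsC1 cardsT !card_ord !inE eqxx.
have -> : [set p | (vi p.1 \in core None) || (xv p \in core None)] = setT.
  by apply/setP => p; rewrite [LHS]inE mem_core_vi inE.
by rewrite cardsT card_prod !card_ord.
Qed.

Lemma dom_count_3k1_gt0 : 0 < dom_count adj (3 * k).+1.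
Proof.
rewrite /dom_count card_gt0; apply/set0Pn; exists ([set v0] :|: tails setT).
have v0t : [set v0] \subset trunk by rewrite sub1set inE.
rewrite inE card_setU_tails // cards1 eqxx andbT.
rewrite dominating_setU_tails ?subsetT ?dominates_v0 ?set11 // => i.
by rewrite dominates_vi set11 orbT.
Qed.

Lemma dom_count_3k3_ge :
  2 ^ (3 * k) + 3 * k * 2 ^ (2 * k).+1 <= dom_count adj (3 * k).+3.
Proof.
pose A := [set tY : option P * {set P} | y_forced (core tY.1) \subset tY.2].
have -> : 2 ^ (3 * k) + 3 * k * 2 ^ (2 * k).+1 = #|A|.
  rewrite (card_supset_pairs (fun t => y_forced (core t))) big_option.
  under eq_bigr => p _ do rewrite card_setC_y_forced_core.
  by rewrite card_setC_y_forced_core sum_nat_const card_prod !card_ord.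
apply: (dom_count_ge (f := fun tY => core tY.1 :|: tails tY.2)).
  move=> [t1 Y1] [t2 Y2] _ _ /= E.
  by have [/core_inj -> ->] := setU_tails_inj (core_sub_trunk _) (core_sub_trunk _) E.
move=> [t Y]; rewrite inE /= => forcedY.
rewrite card_setU_tails ?core_sub_trunk // card_core add3n eqxx andbT.
rewrite dominating_setU_tails //.
  exact: core_dominates_v0.
exact: core_dominates_vi.
Qed.

Lemma dom_count_3k2_le : dom_count adj (3 * k).+2 <= 3 * 2 ^ k + 12 * k + 1.
Proof.
rewrite -sum_root_pair_choices -(card_supset_pairs (fun w => y_forced [set v0; w])).
apply: (dom_count_le (f := fun wY => [set v0; wY.1] :|: tails wY.2)).
move=> S domS cardS; have [w ES] := small_dominating_shape domS cardS.
exists (w, y_paths S) => //; rewrite inE /=.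
by rewrite -(y_forced_setU_tails _ (y_paths S)) -ES y_forced_sub_y_paths.
Qed.

End Tree.

Lemma four_mul_le_exp2 n : 4 <= n -> 4 * n <= 2 ^ n.
Proof.
elim: n => // n IHn; rewrite leq_eqVlt => /orP[/eqP <- // | n_ge4].
by rewrite expnS; have := IHn n_ge4; lia.
Qed.

Lemma tree_counts_ineq k : 4 <= k ->
  (3 * 2 ^ k + 12 * k + 1) ^ 2 < 2 ^ (3 * k) + 3 * k * 2 ^ (2 * k).+1.
Proof.
move=> k_ge4; have := four_mul_le_exp2 k_ge4.
rewrite (expnS 2 (2 * k)) (mulnC 3 k) (mulnC 2 k) !expnM.
set a := 2 ^ k => a_ge; have a_ge16 : 16 <= a by lia.
have sq_le : (3 * a + 12 * k + 1) ^ 2 <= (6 * a + 1) ^ 2 by rewrite leq_sqr; lia.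
have cube_ge : 16 * a ^ 2 <= a ^ 3 by rewrite (expnS a 2) leq_mul2r a_ge16 orbT.
have mid_ge : 24 * a ^ 2 <= 3 * k * (2 * a ^ 2) by nia.
nia.
Qed.

Theorem proposition2p1 (k : nat) : (4 <= k)%N ->
  ~ log_concave (dom_poly (@Tk_adj k)) #|Tk_vertex k|.
Proof.
move=> k_ge4 lc.
have cardV : #|Tk_vertex k| = 9 * k + 4.
  by rewrite !card_sum !card_prod card_unit !card_ord; lia.
have i_le : (3 * k).+2 <= #|Tk_vertex k|.-1 by rewrite cardV; lia.
have := lc (3 * k).+2 isT i_le; rewrite /= !coef_dom_poly ?cardV; try lia.
rewrite expr2 -!PoszM lez_nat => lck.
have := tree_counts_ineq k_ge4; rewrite ltnNge => /negP; apply.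
apply: leq_trans (dom_count_3k3_ge k) _.
apply: leq_trans (leq_pmull _ (dom_count_3k1_gt0 k)) _.
by rewrite (leq_trans lck) // mulnn leq_sqr dom_count_3k2_le.
Qed.
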